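(* Let $\rho\colon\mathrm{Isom}(\mathbf H^1_{\mathbb C})_o\to\mathrm{Isom}(\mathbf H^\infty_{\mathbb C})_o$ be the complexification of an irreducible representation $\mathrm{Isom}(\mathbf H^1_{\mathbb C})_o\to\mathrm{Isom}(\mathbf H^\infty_{\mathbb R})_o$. Then $\mathrm{Im}\,K(b)=0$ for every $b\in\mathbb R$.
   Context: $\mathbf H^\infty_{\mathbb R}$ is defined from a real separable Hilbert space $\mathcal H_{\mathbb R}$ with a strongly non-degenerate symmetric bilinear form of signature $(1,\infty)$, and its isometries are induced by $O(1,\infty)$; a representation into $\mathrm{Isom}(\mathbf H^\infty_{\mathbb R})$ is a homomorphism into $O(1,\infty)$ acting on $\mathcal H_{\mathbb R}$; its complexification is the induced action on $\mathcal H=\mathcal H_{\mathbb R}\otimes\mathbb C$ with the sesquilinear extension $B$ of the form, giving a representation into $U(B)$ and hence into $\mathrm{Isom}(\mathbf H^\infty_{\mathbb C})_o$ where $\mathbf H^\infty_{\mathbb C}=\{[v]:B(v,v)>0\}$ (and this complexification is non-elementary). Representations are orbitally continuous homomorphisms; irreducible = no fixed point in the space or its boundary, no invariant pair of boundary points, and no proper invariant hyperbolic subspace. $\mathbf H^1_{\mathbb C}$: $\mathbb C^2$ with $B(z,w)=z_1\bar w_1-z_2\bar w_2$, $\xi_{1,2}=(e_1\pm e_2)/\sqrt2$; $g(\lambda,b)\in SU(1,1)$ has matrix $\begin{pmatrix}\lambda&ib\\0&\lambda^{-1}\end{pmatrix}$ in basis $(\xi_1,\xi_2)$. For non-elementary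 $\rho$ into $\mathrm{Isom}(\mathbf H^\infty_{\mathbb C})_o$: $\eta_1$ = unique common fixed boundary point of the $\rho(g(\lambda,b))$, $\eta_2$ = other endpoint of the common axis of the $\rho(g(\lambda,0))$, $\lambda\neq1$; isotropic representatives with $B(\eta_1,\eta_2)=1$; $E=\eta_1^\perp\cap\eta_2^\perp$; the lift $T_b\in U(B)$ of $\rho(g(1,b))$ with $T_b\eta_1=\eta_1$ satisfies $T_b\eta_2=K(b)\eta_1+\eta_2+c(b)$, $K(b)\in\mathbb C$, $c(b)\in E$ (the paper writes $\Delta(b)=\mathrm{Im}K(b)$). *)

From mathcomp Require Import all_boot all_algebra.
From mathcomp Require Import all_classical all_reals all_analysis.
From mathcomp Require Import complex.
Set Implicit Arguments. Unset Strict Implicit. Unset Printing Implicit Defensive.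
Import GRing.Theory Num.Theory numFieldNormedType.Exports.
Local Open Scope ring_scope.
Local Open Scope complex_scope.

Section HypDefs.
Variable R : realType.

(* Model: H_R = R (+) l^2(N), realised as square-summable sequences        *)
(* v : nat -> R; index 0 is the positive direction, indices >= 1 span the  *)
Definition vec := nat -> R.

Definition l2 (v : vec) : Prop := cvgn (series (fun k => v k ^+ 2)).

Definition normsq (v : vec) : R := limn (series (fun k => v k ^+ 2)).

Definition Bform (u v : vec) : R :=
  u 0%N * v 0%N - limn (series (fun k => u k.+1 * v k.+1)).

Definition vlin (a : R) (u v : vec) : vec := fun k => a * u k + v k.
Definition vsub (u v : vec) : vec := fun k => u k - v k.
Definition vzero : vec := fun _ => 0.

(* T : H_R -> H_R is an element of O(1,oo) preserving the upper sheet of the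
   hyperboloid, i.e. an isometry of H^oo_R (bounded, linear, bijective on H_R,
   preserving B, sending the positive cone component {x_0 > 0} to itself). *)
Definition isomR (T : vec -> vec) : Prop :=
  [/\ (forall v, l2 v -> l2 (T v)),
      (forall a u v, l2 u -> l2 v -> T (vlin a u v) = vlin a (T u) (T v)),
      (exists C : R, forall v, l2 v -> normsq (T v) <= C * normsq v),
      ((forall u v, l2 u -> l2 v -> T u = T v -> u = v) /\
       (forall w, l2 w -> exists v, l2 v /\ T v = w)) &
      ((forall u v, l2 u -> l2 v -> Bform (T u) (T v) = Bform u v) /\
       (forall v, l2 v -> 0 < Bform v v -> 0 < v 0%N -> 0 < T v 0%N))].

Definition rproj_eq (u v : vec) : Prop := exists a : R, a != 0 /\ v = (fun k => a * u k).

(* points of H^oo_R and of its boundary (as representatives) *)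
Definition rpoint (x : vec) : Prop := l2 x /\ 0 < Bform x x.
Definition rboundary (xi : vec) : Prop := [/\ l2 xi, xi <> vzero & Bform xi xi = 0].

(* closed linear subspaces W of H_R meeting the positive cone: they define the
   (non-empty) hyperbolic subspaces  P(W) /\ H^oo_R. *)
Definition hyp_subspace (W : vec -> Prop) : Prop :=
  [/\ (forall w, W w -> l2 w), W vzero,
      (forall a u v, W u -> W v -> W (vlin a u v)),
      (forall v, l2 v -> (forall e : R, 0 < e -> exists w, W w /\ normsq (vsub v w) < e) -> W v) &
      (exists x, W x /\ 0 < Bform x x)].

(* The group Isom(H^1_C)_o = PU(1,1) = U(1,1)/U(1), with U(1,1) the 2x2    *)
(* complex matrices preserving B(z,w) = z1 w1^* - z2 w2^*.                 *)
Definition Jmx : 'M[R[i]]_2 := diag_mx (\row_(i < 2) (if i == ord0 then 1 else -1)).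

Definition U11 (g : 'M[R[i]]_2) : Prop := (map_mx Num.conj g)^T *m Jmx *m g = Jmx.

(* Q has columns e1+e2, e1-e2 = sqrt 2 xi_1, sqrt 2 xi_2; since Q^2 = 2,
   the matrix with matrix M in the basis (xi_1, xi_2) is Q M Q / 2. *)
Definition Qmx : 'M[R[i]]_2 :=
  \matrix_(i < 2, j < 2) (if (i == 1) && (j == 1) then -1 else 1).

Definition Mxi (lam b : R) : 'M[R[i]]_2 :=
  \matrix_(i < 2, j < 2)
    (if i == ord0 then (if j == ord0 then lam%:C else 'i * b%:C)
     else (if j == ord0 then 0 else (lam^-1)%:C)).

Definition gmat (lam b : R) : 'M[R[i]]_2 := 2^-1 *: (Qmx *m Mxi lam b *m Qmx).

(* rho : U(1,1) -> functions on H_R, descending to PU(1,1), is a representation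
   (orbitally continuous homomorphism) into Isom(H^oo_R). *)
Definition representation (rho : 'M[R[i]]_2 -> vec -> vec) : Prop :=
  [/\ (forall g, U11 g -> isomR (rho g)),
      (forall g h, U11 g -> U11 h -> forall v, l2 v -> rho (g *m h) v = rho g (rho h v)),
      (forall g (mu : R[i]), U11 g -> `|mu| = 1 -> forall v, l2 v -> rho (mu *: g) v = rho g v) &
      (forall g x, U11 g -> l2 x -> Bform x x = 1 -> 0 < x 0%N ->
         forall e : R, 0 < e -> exists d : R, 0 < d /\
           forall h, U11 h -> (forall i j, `|h i j - g i j| < d%:C) ->
             normsq (vsub (rho h x) (rho g x)) < e)].

Definition irreducible (rho : 'M[R[i]]_2 -> vec -> vec) : Prop :=
  [/\
      ~ (exists x, rpoint x /\ forall g, U11 g -> rproj_eq x (rho g x)),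
      ~ (exists xi, rboundary xi /\ forall g, U11 g -> rproj_eq xi (rho g xi)),
      ~ (exists xi xi', [/\ rboundary xi, rboundary xi', ~ rproj_eq xi xi' &
           forall g, U11 g ->
             (rproj_eq xi (rho g xi) /\ rproj_eq xi' (rho g xi')) \/
             (rproj_eq xi' (rho g xi) /\ rproj_eq xi (rho g xi'))]) &
      ~ (exists W, [/\ hyp_subspace W, (exists v, l2 v /\ ~ W v) &
           forall g w, U11 g -> W w -> W (rho g w)])].

(* Complexification H = H_R (x) C, vectors z = z.1 + i z.2.                *)
Definition cvec := (vec * vec)%type.

Definition cl2 (z : cvec) : Prop := l2 z.1 /\ l2 z.2.
Definition czero : cvec := (vzero, vzero).

(* sesquilinear extension: B(x+iy, u+iv) = B(x,u)+B(y,v) + i (B(y,u)-B(x,v)) *)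
Definition cB (z w : cvec) : R[i] :=
  (Bform z.1 w.1 + Bform z.2 w.2) +i* (Bform z.2 w.1 - Bform z.1 w.2).

Definition csmul (mu : R[i]) (z : cvec) : cvec :=
  (fun k => complex.Re mu * z.1 k - complex.Im mu * z.2 k, fun k => complex.Re mu * z.2 k + complex.Im mu * z.1 k).

Definition cvadd (z w : cvec) : cvec := (fun k => z.1 k + w.1 k, fun k => z.2 k + w.2 k).

Definition complexify (T : vec -> vec) : cvec -> cvec := fun z => (T z.1, T z.2).

Definition cproj_eq (z w : cvec) : Prop := exists mu : R[i], mu != 0 /\ w = csmul mu z.

(* boundary points of H^oo_C = {[v] : B(v,v) > 0}: isotropic lines *)
Definition cboundary (z : cvec) : Prop := [/\ cl2 z, z <> czero & cB z z = 0].

Definition cfixes (T : cvec -> cvec) (z : cvec) : Prop := exists mu : R[i], T z = csmul mu z.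

(* The geodesic of H^oo_C joining distinct boundary points [xi], [xi'] is
   { [t xi + xi'] : t in C, t B(xi,xi') real > 0 }. *)
Definition geod_pt (xi xi' : cvec) (t : R[i]) : cvec := cvadd (csmul t xi) xi'.
Definition on_geod_param (xi xi' : cvec) (t : R[i]) : Prop := 0 < t * cB xi xi'.

(* [xi], [xi'] are the endpoints of the axis of (the isometry induced by) T:
   T preserves the geodesic joining them and acts on it by a nontrivial
   translation (no point of it is fixed). *)
Definition axis_endpoints (T : cvec -> cvec) (xi xi' : cvec) : Prop :=
  [/\ cboundary xi, cboundary xi', ~ cproj_eq xi xi',
      (forall t, on_geod_param xi xi' t ->
         exists t', on_geod_param xi xi' t' /\ cproj_eq (geod_pt xi xi' t') (T (geod_pt xi xi' t))) &
      (forall t, on_geod_param xi xi' t ->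
         ~ cproj_eq (geod_pt xi xi' t) (T (geod_pt xi xi' t)))].

End HypDefs.

From HB Require Import structures.
From mathcomp Require Import all_boot all_algebra.
From mathcomp Require Import all_classical all_reals all_analysis.
From mathcomp Require Import complex ring lra.
Import order.Order.TTheory GRing.Theory Num.Theory numFieldNormedType.Exports.
Local Open Scope ring_scope.
Local Open Scope complex_scope.

(* Every [rho g] is the complexification of a real operator, so it commutes with
   complex conjugation.  Hence the conjugate of the unique common fixed point
   [eta1] is again a common fixed point, and [eta1] is a complex multiple of a
   real isotropic vector [e]; the eigenvalues of the [rho g] on [eta1] are then
   real.  The translation [rho (g(2,0))] along the axis makes [eta2] an
   eigenvector with a real eigenvalue [r], [r^2 <> 1]; so the real and imaginary
   parts of [eta2] are mutually orthogonal isotropic vectors, hence collinear,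
   and [eta2] is a complex multiple [beta f] of a real vector.  Finally
   [K = B(T_b eta2, eta2) = mu |beta|^2 B(rho(g(1,b)) f, f)] with [mu] real. *)

Section VecPointwise.
Context {R : realType}.
Implicit Types (a : R) (u v : vec R).

Lemma vec0E k : (0 : vec R) k = 0. Proof. by []. Qed.
Lemma vecDE u v k : (u + v) k = u k + v k. Proof. by []. Qed.
Lemma vecNE u k : (- u) k = - u k. Proof. by []. Qed.
Lemma vecZE a u k : (a *: u) k = a * u k. Proof. by []. Qed.
End VecPointwise.

Ltac cvec_ext := congr pair; apply/funext => k; rewrite /= ?(vec0E, vecDE, vecNE, vecZE).

Ltac complex_ring := apply/eqP; rewrite eq_complex /=; apply/andP; split; apply/eqP; ring.

Section SquareSummable.
Context {R : realType}.
Implicit Types (a : R) (u v : vec R).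

Lemma cvgn_series_shift {f : R ^nat} :
  cvgn (series f) -> cvgn (series (fun k => f k.+1)).
Proof.
move=> cvf.
have -> : series (fun k => f k.+1) = (fun n => series f n.+1 - f 0%N).
  by apply/funext => n; rewrite /series /= big_nat_recl //= addrC addKr.
apply: is_cvgB; last exact: is_cvg_cst.
by apply/cvg_ex; exists (limn (series f)); rewrite (cvg_shiftS (series f)).
Qed.

Lemma l2_add {u v} : l2 u -> l2 v -> l2 (u + v).
Proof.
move=> l2u l2v.
apply: (@series_le_cvg _ _ (fun k => 2 * u k ^+ 2 + 2 * v k ^+ 2)) => [n|n|n|].
- by rewrite sqr_ge0.
- by have := sqr_ge0 (u n); have := sqr_ge0 (v n); nra.
- by rewrite vecDE; have := sqr_ge0 (u n - v n); nra.
- have -> : (fun k => 2 * u k ^+ 2 + 2 * v k ^+ 2) =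
    2 *: (fun k => u k ^+ 2) + 2 *: (fun k => v k ^+ 2).
    by apply/funext => k; rewrite vecDE !vecZE.
  by apply: is_cvg_seriesD; apply: is_cvg_seriesZ.
Qed.

Lemma l2_scale a {u} : l2 u -> l2 (a *: u).
Proof.
move=> l2u; rewrite /l2.
have -> : (fun k => (a *: u) k ^+ 2) = a ^+ 2 *: (fun k => u k ^+ 2).
  by apply/funext => k; rewrite vecZE exprMn.
exact: is_cvg_seriesZ.
Qed.

Lemma l2_opp {u} : l2 u -> l2 (- u).
Proof. by move=> l2u; rewrite -scaleN1r; apply: l2_scale. Qed.

Lemma l2_0 : l2 (0 : vec R).
Proof.
rewrite /l2; have -> : series (fun k => (0 : vec R) k ^+ 2) = cst 0.
  by apply/funext => n; rewrite /series /= big1 // => k _; rewrite expr0n.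
exact: is_cvg_cst.
Qed.

Lemma cvgn_series_mul {u v} : l2 u -> l2 v ->
  cvgn (series (fun k => u k.+1 * v k.+1)).
Proof.
move=> l2u l2v; apply: normed_cvg.
apply: (@series_le_cvg _ _ (fun k => u k.+1 ^+ 2 + v k.+1 ^+ 2)) => [n|n|n|].
- exact: normr_ge0.
- by rewrite addr_ge0 ?sqr_ge0.
- rewrite ler_norml; have := sqr_ge0 (u n.+1 + v n.+1); have := sqr_ge0 (u n.+1 - v n.+1).
  by move=> *; apply/andP; split; nra.
- exact (is_cvg_seriesD (cvgn_series_shift l2u) (cvgn_series_shift l2v)).
Qed.
End SquareSummable.

#[local] Hint Resolve l2_add l2_scale l2_opp l2_0 : core.

Section RealForm.
Context {R : realType}.
Implicit Types (a : R) (u v w : vec R).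

Lemma Bform_sym u v : Bform u v = Bform v u.
Proof.
rewrite /Bform mulrC; congr (_ - limn (series _)).
by apply/funext => k; rewrite mulrC.
Qed.

Lemma Bform_addl {u v w} : l2 u -> l2 v -> l2 w ->
  Bform (u + v) w = Bform u w + Bform v w.
Proof.
move=> l2u l2v l2w; rewrite /Bform.
have -> : (fun k => (u + v) k.+1 * w k.+1) =
    (fun k => u k.+1 * w k.+1) + (fun k => v k.+1 * w k.+1).
  by apply/funext => k; rewrite vecDE mulrDl.
by rewrite lim_seriesD; [rewrite vecDE; ring|exact: cvgn_series_mul..].
Qed.

Lemma Bform_scalel a {u w} : l2 u -> l2 w -> Bform (a *: u) w = a * Bform u w.
Proof.
move=> l2u l2w; rewrite /Bform.
have -> : (fun k => (a *: u) k.+1 * w k.+1) = a *: (fun k => u k.+1 * w k.+1).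
  by apply/funext => k; exact: (esym (mulrA _ _ _)).
rewrite lim_seriesZ; last exact: cvgn_series_mul.
by rewrite vecZE -[a *: limn _]/(a * limn _); ring.
Qed.

Lemma Bform_oppl {u w} : l2 u -> l2 w -> Bform (- u) w = - Bform u w.
Proof. by move=> l2u l2w; rewrite -scaleN1r Bform_scalel // mulN1r. Qed.

Lemma Bform_addr {u v w} : l2 u -> l2 v -> l2 w ->
  Bform w (u + v) = Bform w u + Bform w v.
Proof. by move=> *; rewrite Bform_sym Bform_addl // !(Bform_sym w). Qed.

Lemma Bform_scaler a {u w} : l2 u -> l2 w -> Bform w (a *: u) = a * Bform w u.
Proof. by move=> *; rewrite Bform_sym Bform_scalel // Bform_sym. Qed.

Lemma Bform_oppr {u w} : l2 u -> l2 w -> Bform w (- u) = - Bform w u.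
Proof. by move=> *; rewrite Bform_sym Bform_oppl // Bform_sym. Qed.

Lemma Bform0l {v} : l2 v -> Bform 0 v = 0.
Proof. by move=> l2v; rewrite -(scale0r (0 : vec R)) Bform_scalel ?mul0r. Qed.

(* The form is negative definite on the hyperplane [v 0 = 0]. *)
Lemma isotropic_eq0 {w} : l2 w -> w 0%N = 0 -> Bform w w = 0 -> w = 0.
Proof.
move=> l2w w00; rewrite /Bform w00 mul0r sub0r => /eqP; rewrite oppr_eq0 => /eqP lim0.
set f := fun k => w k.+1 * w k.+1 in lim0.
have f_ge0 n : 0 <= f n by rewrite /f -expr2 sqr_ge0.
have series_nd : {homo series f : n m / (n <= m)%N >-> n <= m}.
  apply: homo_leq => [x|y x z|n]; [exact: lexx|exact: le_trans|].
  by rewrite seriesSr lerDl.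
apply/funext => -[|k] //.
have := nondecreasing_cvgn_le series_nd (cvgn_series_mul l2w l2w) k.+1.
rewrite lim0 seriesSr => le_sum0.
have sum_ge0 : 0 <= series f k by apply: sumr_ge0.
have /eqP : f k = 0 by apply/eqP; rewrite eq_le f_ge0 andbT (le_trans _ le_sum0) ?lerDr.
by rewrite mulf_eq0 orbb => /eqP.
Qed.

Lemma isotropic_collinear {u v} : l2 u -> l2 v ->
  Bform u u = 0 -> Bform v v = 0 -> Bform u v = 0 ->
  exists f (al be : R), [/\ l2 f, u = al *: f & v = be *: f].
Proof.
move=> l2u l2v uu vv uv.
have [u00|u0n0] := eqVneq (u 0%N) 0.
  by exists v, 0, 1; rewrite scale0r scale1r (isotropic_eq0 l2u u00 uu).
pose t := v 0%N / u 0%N.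
have : v - t *: u = 0.
  apply: isotropic_eq0; first by auto.
    by rewrite vecDE vecNE vecZE /t; field.
  rewrite Bform_addl ?Bform_addr ?Bform_oppl ?Bform_oppr ?Bform_scalel ?Bform_scaler; auto.
  by rewrite (Bform_sym v u) uu vv uv; ring.
by move/eqP; rewrite subr_eq0 => /eqP ->; exists u, 1, t; rewrite scale1r.
Qed.

Section Isometry.
Context {T : vec R -> vec R} (isoT : isomR T).

Lemma isomR_l2 {u} : l2 u -> l2 (T u).
Proof. by case: isoT => + _ _ _ _; apply. Qed.

Lemma isomR_Bform {u v} : l2 u -> l2 v -> Bform (T u) (T v) = Bform u v.
Proof. by case: isoT => _ _ _ _ [+ _]; apply. Qed.

Lemma isomR_lin a {u v} : l2 u -> l2 v -> T (a *: u + v) = a *: T u + T v.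
Proof. by case: isoT => _ + _ _ _; apply. Qed.

Lemma isomR_0 : T 0 = 0.
Proof.
apply: (@addrI _ (T 0)); rewrite addr0.
by have := isomR_lin 1 (l2_0 (R:=R)) l2_0; rewrite !scale1r !addr0 => <-.
Qed.

Lemma isomR_add {u v} : l2 u -> l2 v -> T (u + v) = T u + T v.
Proof. by move=> l2u l2v; have := isomR_lin 1 l2u l2v; rewrite !scale1r. Qed.

Lemma isomR_scale a {u} : l2 u -> T (a *: u) = a *: T u.
Proof. by move=> l2u; have := isomR_lin a l2u l2_0; rewrite !addr0 isomR_0 addr0. Qed.

Lemma isomR_opp {u} : l2 u -> T (- u) = - T u.
Proof. by move=> l2u; rewrite -scaleN1r isomR_scale // scaleN1r. Qed.

Lemma isomR_neq0 {u} : l2 u -> u <> 0 -> T u <> 0.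
Proof.
move=> l2u u_neq0 Tu0; apply: u_neq0.
by case: isoT => _ _ _ [inj _] _; apply: inj; rewrite ?isomR_0.
Qed.

Lemma isomR_eigen_orthogonal r {u v} : l2 u -> l2 v ->
  T u = r *: u -> T v = r *: v -> r ^+ 2 != 1 -> Bform u v = 0.
Proof.
move=> l2u l2v Tu Tv r2_neq1.
have Buv : Bform u v = r ^+ 2 * Bform u v.
  by rewrite -{1}(isomR_Bform l2u l2v) Tu Tv (Bform_scalel r l2u (l2_scale r l2v))
     (Bform_scaler r l2v l2u) mulrA -expr2.
have : (1 - r ^+ 2) * Bform u v = 0 by rewrite mulrBl mul1r -Buv subrr.
by move/eqP; rewrite mulf_eq0 subr_eq0 eq_sym (negbTE r2_neq1) => /eqP.
Qed.
End Isometry.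
End RealForm.

Section CvecModule.
Context {R : realType}.
Implicit Types (a b : R[i]) (z w : cvec R).

Lemma csmulA a b z : csmul a (csmul b z) = csmul (a * b) z.
Proof. by case: a b => [ar ai] [br bi]; cvec_ext; ring. Qed.

Lemma csmul1 z : csmul 1 z = z.
Proof. by case: z => x y; cvec_ext; ring. Qed.

Lemma csmulDr a z w : csmul a (z + w) = csmul a z + csmul a w.
Proof. by cvec_ext; ring. Qed.

Lemma csmulDl z a b : csmul (a + b) z = csmul a z + csmul b z.
Proof. by case: a b => [ar ai] [br bi]; cvec_ext; ring. Qed.
End CvecModule.

HB.instance Definition _ (R : realType) := GRing.Zmodule.on (cvec R).
HB.instance Definition _ (R : realType) :=
  GRing.Zmodule_isLmodule.Build R[i] (cvec R) csmulA csmul1 csmulDr csmulDl.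

Section ComplexVectors.
Context {R : realType}.
Implicit Types (a : R[i]) (z w : cvec R) (u : vec R).

Definition creal u : cvec R := (u, 0).
Definition cconj z : cvec R := (z.1, - z.2).

Lemma csmulE a z : csmul a z = a *: z.
Proof. by []. Qed.

Lemma cvec_scaleE a z :
  a *: z = (complex.Re a *: z.1 - complex.Im a *: z.2, complex.Re a *: z.2 + complex.Im a *: z.1).
Proof. by []. Qed.

Lemma cl2_add {z w} : cl2 z -> cl2 w -> cl2 (z + w).
Proof. by case=> ? ? [? ?]; split; apply: l2_add. Qed.

Lemma cl2_scale a {z} : cl2 z -> cl2 (a *: z).
Proof. by case=> ? ?; rewrite cvec_scaleE; split => /=; auto. Qed.

Lemma cl2_creal {u} : l2 u -> cl2 (creal u).
Proof. by split => //=; apply: l2_0. Qed.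

Lemma cl2_cconj {z} : cl2 z -> cl2 (cconj z).
Proof. by case=> ? ?; split => /=; auto. Qed.
End ComplexVectors.

#[local] Hint Resolve cl2_add cl2_scale cl2_creal cl2_cconj : core.

Section ComplexForm.
Context {R : realType}.
Implicit Types (a : R[i]) (z w : cvec R) (u v : vec R).

Lemma cB_conj z w : cB w z = (cB z w)^*.
Proof.
rewrite /cB (Bform_sym w.1 z.1) (Bform_sym w.2 z.2) (Bform_sym w.2 z.1) (Bform_sym w.1 z.2).
by complex_ring.
Qed.

Lemma cB_addl {z z' w} : cl2 z -> cl2 z' -> cl2 w -> cB (z + z') w = cB z w + cB z' w.
Proof.
case=> ? ? [? ?] [? ?]; rewrite /cB /= !Bform_addl //.
by complex_ring.
Qed.

Lemma cB_scalel a {z w} : cl2 z -> cl2 w -> cB (a *: z) w = a * cB z w.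
Proof.
case: a => ar ai [? ?] [? ?]; rewrite cvec_scaleE /cB /=.
rewrite !(Bform_addl, Bform_oppl, Bform_scalel); auto.
by complex_ring.
Qed.

Lemma cB_addr {z w w'} : cl2 z -> cl2 w -> cl2 w' -> cB z (w + w') = cB z w + cB z w'.
Proof. by case=> ? ? [? ?] [? ?]; rewrite /cB /= !Bform_addr //; complex_ring. Qed.

Lemma cB_scaler a {z w} : cl2 z -> cl2 w -> cB z (a *: w) = a^* * cB z w.
Proof.
case: a => ar ai [? ?] [? ?]; rewrite cvec_scaleE /cB /=.
by rewrite !(Bform_addr, Bform_oppr, Bform_scaler); auto; complex_ring.
Qed.

Lemma cB_creal {u v} : l2 u -> l2 v -> cB (creal u) (creal v) = (Bform u v)%:C.
Proof.
move=> l2u l2v; rewrite /cB /= (Bform_sym u 0) !Bform0l //.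
by rewrite addr0 subrr.
Qed.

Lemma cB_cconj {z w} : cl2 z -> cl2 w -> cB (cconj z) (cconj w) = (cB z w)^*.
Proof. by case=> ? ? [? ?]; rewrite /cB /= ?Bform_oppl ?Bform_oppr; auto; complex_ring. Qed.

Lemma cconj_scale a z : cconj (a *: z) = a^* *: cconj z.
Proof. by case: a => ar ai; cvec_ext; ring. Qed.

Lemma cconj_eq0 z : cconj z = 0 -> z = 0.
Proof. by case: z => x y [/= -> /eqP]; rewrite oppr_eq0 => /eqP ->. Qed.

Section Complexify.
Context {T : vec R -> vec R} (isoT : isomR T).
Local Notation TC := (complexify T).

Lemma complexify_cB {z w} : cl2 z -> cl2 w -> cB (TC z) (TC w) = cB z w.
Proof. by case=> ? ? [? ?]; rewrite /cB /= !(isomR_Bform isoT). Qed.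

Lemma complexify_add {z w} : cl2 z -> cl2 w -> TC (z + w) = TC z + TC w.
Proof. by case=> ? ? [? ?]; congr pair; apply: (isomR_add isoT). Qed.

Lemma complexify_scale a {z} : cl2 z -> TC (a *: z) = a *: TC z.
Proof.
case=> ? ?; rewrite !cvec_scaleE /complexify /=.
by congr pair; rewrite (isomR_add isoT) ?(isomR_opp isoT) ?(isomR_scale isoT); auto.
Qed.

Lemma complexify_creal {u} : TC (creal u) = creal (T u).
Proof. by rewrite /complexify /= (isomR_0 isoT). Qed.

Lemma complexify_cconj {z} : cl2 z -> TC (cconj z) = cconj (TC z).
Proof. by case=> ? ?; rewrite /complexify /= (isomR_opp isoT). Qed.
End Complexify.
End ComplexForm.

Section RealLines.
Context {R : realType}.
Implicit Types (a nu : R[i]) (z : cvec R) (u v e : vec R) (T : vec R -> vec R).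

Lemma cboundary_cconj {z} : cboundary z -> cboundary (cconj z).
Proof.
case=> cl2z z_neq0 zz; split; auto; first by move/cconj_eq0.
by rewrite cB_cconj // zz conjc0.
Qed.

Lemma cfixes_cconj {T z} : isomR T -> cl2 z ->
  cfixes (complexify T) z -> cfixes (complexify T) (cconj z).
Proof.
move=> isoT cl2z [nu Tz]; exists nu^*.
by rewrite (complexify_cconj isoT cl2z) Tz; apply: cconj_scale.
Qed.

Lemma cconj_collinear_real {z nu} : cl2 z -> cconj z = nu *: z ->
  exists a e, l2 e /\ z = a *: creal e.
Proof.
case: z => x y [/= l2x l2y]; have [->|nu_neqN1] := eqVneq nu (-1).
  rewrite scaleN1r => /(congr1 fst) /= xN; exists 'i, y; split => //.
  have -> : x = 0 by apply/funext => k; have := congr1 (fun f => f k) xN; rewrite /= vecNE vec0E; lra.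
  by cvec_ext; ring.
move=> conj_z; exists ((1 + nu)^-1 * 2), x; split => //.
have nu1_neq0 : 1 + nu != 0 by rewrite addrC addr_eq0.
rewrite -scalerA -(scalerK nu1_neq0 ((x, y) : cvec R)); congr (_ *: _).
rewrite scalerDl scale1r -conj_z.
by cvec_ext; ring.
Qed.

Lemma scale_creal_neq0 {a e} : a *: creal e <> 0 -> a != 0 /\ e <> 0.
Proof.
move=> ae_neq0; split; first by apply: contra_notN ae_neq0 => /eqP ->; rewrite scale0r.
by move=> e0; apply: ae_neq0; rewrite e0; cvec_ext; ring.
Qed.

Lemma scale_creal_Im0 {nu u v} : nu *: creal u = creal v -> u <> 0 -> complex.Im nu = 0.
Proof.
rewrite cvec_scaleE => /(congr1 snd) /=; rewrite scaler0 add0r => /eqP.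
by rewrite scaler_eq0 => /orP[/eqP //|/eqP u0 /(_ u0)].
Qed.

Lemma complexify_real_line {T} a {e} : isomR T -> l2 e ->
  complexify T (a *: creal e) = a *: creal (T e).
Proof. by move=> isoT l2e; rewrite (complexify_scale isoT) ?complexify_creal; auto. Qed.

Lemma eigenvector_real_line {T z r} : isomR T -> cl2 z ->
  complexify T z = r%:C *: z -> r ^+ 2 != 1 ->
  exists b f, l2 f /\ z = b *: creal f.
Proof.
case: z => x y isoT [/= l2x l2y]; rewrite cvec_scaleE /= !scale0r subr0 addr0 => -[Tx Ty] r2_neq1.
have [f [al [be [l2f -> ->]]]] := isotropic_collinear l2x l2y
  (isomR_eigen_orthogonal isoT r l2x l2x Tx Tx r2_neq1)
  (isomR_eigen_orthogonal isoT r l2y l2y Ty Ty r2_neq1)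
  (isomR_eigen_orthogonal isoT r l2x l2y Tx Ty r2_neq1).
by exists (al +i* be), f; split => //; cvec_ext; ring.
Qed.

Lemma real_line_eigenvalue_real {T a e} : isomR T -> l2 e -> e <> 0 -> a != 0 ->
  cfixes (complexify T) (a *: creal e) ->
  exists l : R, complexify T (a *: creal e) = l%:C *: (a *: creal e).
Proof.
move=> isoT l2e e_neq0 a_neq0 [nu]; rewrite csmulE (complexify_real_line a isoT l2e) => Tae.
have : nu *: creal e = creal (T e).
  by apply: (scalerI a_neq0); rewrite scalerA mulrC -scalerA -Tae.
move=> /scale_creal_Im0/(_ e_neq0) Im0; exists (complex.Re nu).
by rewrite Tae; case: nu Im0 {Tae} => ? ? /= ->.
Qed.

Lemma real_line_scalar_real {T a e mu} : isomR T -> l2 e -> e <> 0 -> a != 0 ->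
  mu *: complexify T (a *: creal e) = a *: creal e -> complex.Im mu = 0.
Proof.
move=> isoT l2e e_neq0 a_neq0; rewrite (complexify_real_line a isoT l2e) scalerA mulrC -scalerA.
by move=> /(scalerI a_neq0)/scale_creal_Im0; apply; apply: isomR_neq0.
Qed.
End RealLines.

Section Axis.
Context {R : realType}.
Implicit Types (l nu t : R[i]) (T : vec R -> vec R).

Lemma geod_ptE (eta1 eta2 : cvec R) t : geod_pt eta1 eta2 t = t *: eta1 + eta2.
Proof. by []. Qed.

Lemma on_geod_param1 {eta1 eta2 : cvec R} : cB eta1 eta2 = 1 -> on_geod_param eta1 eta2 1.
Proof. by rewrite /on_geod_param => ->; rewrite mulr1 ltr01. Qed.

Lemma on_geod_paramE {eta1 eta2 : cvec R} {t} : cB eta1 eta2 = 1 ->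
  on_geod_param eta1 eta2 t -> t = (complex.Re t)%:C /\ 0 < complex.Re t.
Proof.
rewrite /on_geod_param => -> /[!mulr1]; rewrite ltcE /= => /andP[/eqP Im0 Re_gt0].
by split => //; case: t Im0 Re_gt0 => ? ? /= ->.
Qed.

Lemma axis_translation {T} {eta1 eta2 : cvec R} {l} : isomR T -> cB eta1 eta2 = 1 ->
  complexify T eta1 = l *: eta1 -> axis_endpoints (complexify T) eta1 eta2 ->
  exists nu t, [/\ nu != 0, t = (complex.Re t)%:C, 0 < complex.Re t &
    complexify T eta2 = nu *: eta2 + (nu * t - l) *: eta1].
Proof.
move=> isoT h12 Teta1 [[c1 _ _] [c2 _ _] _ preserves _].
have [t [/(on_geod_paramE h12) [tE t_gt0] [nu [nu_neq0]]]] := preserves 1 (on_geod_param1 h12).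
rewrite !geod_ptE scale1r (complexify_add isoT) // Teta1 => Tg.
exists nu, t; split => //; apply: (addrI (l *: eta1)); rewrite Tg csmulE.
by rewrite scalerDr scalerA scalerBl addrCA [l *: _ + _]addrC subrK addrC.
Qed.

Lemma axis_eigenvector {T} {eta1 eta2 : cvec R} {l : R} : isomR T -> cB eta1 eta2 = 1 ->
  complexify T eta1 = l%:C *: eta1 -> axis_endpoints (complexify T) eta1 eta2 ->
  exists r : R, r ^+ 2 != 1 /\ complexify T eta2 = r%:C *: eta2.
Proof.
move=> isoT h12 Teta1 axis.
have [nu [t [nu_neq0 tE t_gt0 Teta2]]] := axis_translation isoT h12 Teta1 axis.
case: axis => [[c1 _ h11] [c2 _ h22] _ _ no_fixed].
have h21 : cB eta2 eta1 = 1 by rewrite cB_conj h12 conjc1.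
have B12 : cB (complexify T eta1) (complexify T eta2) = 1 by rewrite complexify_cB.
have B22 : cB (complexify T eta2) (complexify T eta2) = 0 by rewrite complexify_cB.
rewrite Teta1 Teta2 !(cB_addl, cB_addr, cB_scalel, cB_scaler) in B12 B22; auto.
rewrite h11 h12 h21 h22 in B12 B22.
move: tE t_gt0 nu_neq0 Teta2 B12 B22; case: t => tr ti [->] /= tr_gt0; case: nu => a b nu_neq0 Teta2.
(* Preserving [cB eta1 eta2 = 1] and the isotropy of [eta2] forces [nu] to be real
   and the [eta1]-component of [T eta2] to vanish. *)
move=> /eqP; rewrite eq_complex /= => /andP[/eqP B12r /eqP B12i].
move=> /eqP; rewrite eq_complex /= => /andP[/eqP B22r _].
have la1 : l * a = 1 by rewrite -B12r; ring.
have a_neq0 : a != 0.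
  by apply/eqP => a0; move: la1; rewrite a0 mulr0 => /eqP; rewrite eq_sym oner_eq0.
have b0 : b = 0.
  have lb0 : l * b = 0 by rewrite -[RHS]oppr0 -B12i; ring.
  by rewrite -[b]mul1r -la1 mulrAC lb0 mul0r.
subst b.
have atr : a * tr = l.
  have : 2 * a * (a * tr - l) = 0 by rewrite -B22r; ring.
  by move/eqP; rewrite !mulf_eq0 pnatr_eq0 (negbTE a_neq0) subr_eq0 /= => /eqP.
have d0 : (a +i* 0) * (tr +i* 0) - l%:C = 0.
  by apply/eqP; rewrite eq_complex /=; apply/andP; split; apply/eqP; nra.
rewrite d0 scale0r addr0 in Teta2.
exists a; split => //; apply/negP => /eqP a2.
have la : l = a by rewrite -[l]mulr1 -a2 expr2 mulrA la1 mul1r.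
apply: (no_fixed 1 (on_geod_param1 h12)); exists a%:C; split.
  by apply/eqP => -[a0]; rewrite a0 eqxx in a_neq0.
by rewrite csmulE !geod_ptE scale1r (complexify_add isoT) // Teta1 Teta2 la scalerDr.
Qed.
End Axis.

Lemma sum_ord2 (V : zmodType) (F : 'I_2 -> V) : \sum_(i < 2) F i = F ord0 + F ord_max.
Proof.
rewrite big_ord_recr /= big_ord_recr big_ord0 /= add0r.
by congr (F _ + F _); apply: val_inj.
Qed.

Lemma ord2P (i : 'I_2) : i = ord0 \/ i = ord_max.
Proof. by case: i => [[|[|//]] lt_i2]; [left|right]; apply: val_inj. Qed.

Section GmatUnitary.
Context {R : realType}.

Lemma gmatE (lam b : R) : lam != 0 -> gmat lam b =
  \matrix_(i < 2, j < 2)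
    (if i == ord0 then (if j == ord0 then ((lam + lam^-1) / 2) +i* (b / 2)
                        else ((lam - lam^-1) / 2) +i* (- (b / 2)))
     else (if j == ord0 then ((lam - lam^-1) / 2) +i* (b / 2)
           else ((lam + lam^-1) / 2) +i* (- (b / 2)))).
Proof.
move=> lam_neq0; apply/matrixP => i j.
rewrite !mxE !sum_ord2 !mxE !sum_ord2 !mxE.
have lamC_neq0 : lam%:C != 0 :> R[i] by rewrite fmorph_eq0.
have two_neq0 : (2 : R[i]) != 0 by rewrite pnatr_eq0.
have cE (x y : R) : x +i* y = x%:C + 'i * y%:C by complex_ring.
case: (ord2P i) => ->; case: (ord2P j) => ->;
  by rewrite /= cE !(rmorphD, rmorphM, rmorphN, fmorphV, rmorph_nat); field.
Qed.

Lemma U11_explicit (A D c : R) : A ^+ 2 - D ^+ 2 = 1 ->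
  U11 (\matrix_(i < 2, j < 2)
    (if i == ord0 then (if j == ord0 then A +i* c else D +i* (- c))
     else (if j == ord0 then D +i* c else A +i* (- c)))).
Proof.
move=> AD1; apply/matrixP => i j; rewrite !mxE !sum_ord2 !mxE !sum_ord2 !mxE.
case: (ord2P i) => ->; case: (ord2P j) => ->; rewrite /= ?mulr0n ?mulr1n;
  by apply/eqP; rewrite eq_complex /=; apply/andP; split; apply/eqP; nra.
Qed.

Lemma U11_gmat (lam b : R) : lam != 0 -> U11 (gmat lam b).
Proof. by move=> lam_neq0; rewrite gmatE //; apply: U11_explicit; field. Qed.
End GmatUnitary.

Section TranslationCoefficient.
Context {R : realType}.

Lemma translation_coefficient_real {S : vec R -> vec R} {eta1 eta2 c : cvec R} {f : vec R}
    {beta mu K : R[i]} :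
  isomR S -> l2 f -> cl2 eta1 -> cl2 c -> complex.Im mu = 0 ->
  cB eta1 eta2 = 1 -> cB eta2 eta2 = 0 -> cB c eta2 = 0 -> eta2 = beta *: creal f ->
  mu *: complexify S eta2 = K *: eta1 + eta2 + c -> complex.Im K = 0.
Proof.
move=> isoS l2f c1 cc mu_real h12 h22 hc2 eta2E SK.
have c2 : cl2 eta2 by rewrite eta2E; auto.
have -> : K = cB (mu *: complexify S eta2) eta2.
  by rewrite SK !cB_addl ?cB_scalel ?h12 ?h22 ?hc2 ?mulr1 ?addr0; auto.
have l2Sf := isomR_l2 isoS l2f.
rewrite eta2E (complexify_real_line beta isoS l2f) !cB_scalel ?cB_scaler ?cB_creal; auto.
move: mu_real; case: mu SK => m mi _ /= ->; case: beta eta2E => x y _ /=; ring.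
Qed.
End TranslationCoefficient.

Theorem mainTheorem14 (R : realType) (rho : 'M[R[i]]_2 -> vec R -> vec R)
  (eta1 eta2 : cvec R) :
  representation rho -> irreducible rho ->
  (* eta1: the unique common fixed boundary point of the rho(g(lam,b)) *)
  cboundary eta1 ->
  (forall lam b : R, 0 < lam -> cfixes (complexify (rho (gmat lam b))) eta1) ->
  (forall xi, cboundary xi ->
     (forall lam b : R, 0 < lam -> cfixes (complexify (rho (gmat lam b))) xi) ->
     cproj_eq eta1 xi) ->
  (* eta2: the other endpoint of the common axis of the rho(g(lam,0)), lam <> 1 *)
  (forall lam : R, 0 < lam -> lam != 1 ->
     axis_endpoints (complexify (rho (gmat lam 0))) eta1 eta2) ->
  cB eta1 eta2 = 1 ->
  forall (b : R) (mu K : R[i]) (c : cvec R),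
    (* T_b = mu * rho(g(1,b))_C is the lift in U(B) fixing eta1 *)
    `|mu| = 1 ->
    csmul mu (complexify (rho (gmat 1 b)) eta1) = eta1 ->
    (* T_b eta2 = K eta1 + eta2 + c with c in E = eta1^perp /\ eta2^perp *)
    cl2 c -> cB c eta1 = 0 -> cB c eta2 = 0 ->
    csmul mu (complexify (rho (gmat 1 b)) eta2) = cvadd (cvadd (csmul K eta1) eta2) c ->
    complex.Im K = 0.
Proof.
move=> [isoG _ _ _] _ b1 fix1 uniq1 axis h12 b mu K c _ Seta1 cc _ hc2 Seta2.
have iso lam b' : 0 < lam -> isomR (rho (gmat lam b')).
  by move=> /lt0r_neq0 /(U11_gmat lam b') /isoG.
have [c1 eta1_neq0 _] := b1.
have [nu [_ conj_eta1]] := uniq1 _ (cboundary_cconj b1)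
  (fun lam b' hl => cfixes_cconj (iso lam b' hl) c1 (fix1 lam b' hl)).
have [a [e [l2e eta1E]]] := cconj_collinear_real c1 conj_eta1.
rewrite eta1E in eta1_neq0; have [a_neq0 e_neq0] := scale_creal_neq0 eta1_neq0.
have two_gt0 : (0 : R) < 2 by [].
have two_neq1 : (2 : R) != 1 by rewrite gt_eqF // ltr1n.
have ax := axis 2 two_gt0 two_neq1.
have [_ [c2 _ h22] _ _ _] := ax.
subst eta1.
have [l Tl] := real_line_eigenvalue_real (iso 2 0 two_gt0) l2e e_neq0 a_neq0 (fix1 2 0 two_gt0).
have [r [r2_neq1 Teta2]] := axis_eigenvector (iso 2 0 two_gt0) h12 Tl ax.
have [beta [f [l2f eta2E]]] := eigenvector_real_line (iso 2 0 two_gt0) c2 Teta2 r2_neq1.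
have mu_real := real_line_scalar_real (iso 1 b ltr01) l2e e_neq0 a_neq0 Seta1.
exact: translation_coefficient_real (iso 1 b ltr01) l2f c1 cc mu_real h12 h22 hc2 eta2E Seta2.
Qed.
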